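(* Let $P(x)=\frac1\pi\frac1{1+x^2}$, $P_k(x)=kP(kx)$ for $k=1,2,\dots$, and $\langle T_k,\varphi\rangle=\int_{\mathbb{R}}\varphi(x)P_k(x)\,dx$. Let $\Pi_k$ be the Borel measure on $\mathbb{R}^2$ with $\Pi_k(A)=\iint_A\mathcal{X}_{[-1/k,1/k]}(x-y)\,dx\,dy$ and $\langle\!\langle S_k,\Theta\rangle\!\rangle=\iint\Theta\,d\Pi_k$. For $\Phi\in\mathscr{C}_c(\mathbb{R}^2)$ let $Kir_k\Phi$ be the continuous function with $\int\varphi\,Kir_k\Phi\,P_k\,dx=\iint\varphi(x)\Phi(x,y)\,d\Pi_k(x,y)$ for all $\varphi\in\mathscr{C}_c(\mathbb{R})$. Then for every $x\in\mathbb{R}$, $$\lim_{k\to\infty}Kir_k\Phi(x)=2\pi x^2\Phi(x,x).$$ *)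

From HB Require Import structures.
From mathcomp Require Import all_boot all_order all_algebra.
From mathcomp Require Import all_classical all_reals all_analysis.
Set Implicit Arguments. Unset Strict Implicit. Unset Printing Implicit Defensive.
Import Order.TTheory GRing.Theory Num.Theory.
Import numFieldNormedType.Exports.
Local Open Scope classical_set_scope.
Local Open Scope ring_scope.

Definition Pker {R : realType} (x : R) : R := pi^-1 * (1 + x ^+ 2)^-1.

Definition Pk {R : realType} (k : nat) (x : R) : R := k%:R * Pker (k%:R * x).

Definition band {R : realType} (k : nat) (z : R * R) : R :=
  \1_(`[- k%:R^-1, k%:R^-1]%classic) (z.1 - z.2).

(* the Borel measure Pi_k(A) = \iint_A X_[-1/k,1/k](x-y) dx dy ;
   integrals against Pi_k are written with this density *)
Definition Pi_k {R : realType} (k : nat) (A : set (R * R)) : \bar R :=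
  (\int[(@lebesgue_measure R) \x (@lebesgue_measure R)]_(z in A) (band k z)%:E)%E.

Definition int_Pi {R : realType} (k : nat) (Theta : R * R -> R) : \bar R :=
  (\int[(@lebesgue_measure R) \x (@lebesgue_measure R)]_z (Theta z * band k z)%:E)%E.

Definition has_compact_support {T : topologicalType} {R : realType}
  (f : T -> R) : Prop := compact (closure [set x | f x != 0]).

From HB Require Import structures.
From mathcomp Require Import all_boot all_order all_algebra.
From mathcomp Require Import all_classical all_reals all_analysis.
From mathcomp Require Import measurable_realfun ring lra.
Import Order.TTheory GRing.Theory Num.Theory.
Import numFieldNormedType.Exports.
Local Open Scope classical_set_scope.
Local Open Scope ring_scope.

(* Write G_k := Kir_k * P_k.  Test the defining identity against a narrow tent
   phi centred at x.  On the left, G_k is within eta of G_k(x) on the support of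
   phi, so the integral is G_k(x) * int phi up to eta * int phi.  On the right,
   the band density of Pi_k has integral 2/k in y, so the integral is
   Phi(x,x) * (2/k) * int phi up to the oscillation eps of Phi on a square of
   radius ~1/k around (x,x).  Letting the tent shrink gives
   |k G_k(x) - 2 Phi(x,x)| <= 2 eps, hence k G_k(x) --> 2 Phi(x,x); and
   Kir_k(x) = pi (k^-2 + x^2) * k G_k(x), because k P_k(x) = 1 / (pi (k^-2 + x^2)). *)

(* No measurability is needed: both sides are suprema over simple functions below
   the positive (resp. negative) parts, which are monotone in the integrand. *)
Lemma le_integral_pointwise d (T : measurableType d) (R : realType)
    (mu : {measure set T -> \bar R}) (f g : T -> \bar R) :
  (forall x, (f x <= g x)%E) -> (\int[mu]_x f x <= \int[mu]_x g x)%E.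
Proof.
move=> fg; rewrite /integral !patch_setT; apply: leeB.
- apply: ereal_sup_le => _ [h /= hf <-]; exists h => //= x.
  apply: (le_trans (hf x)); apply: (@funepos_le _ _ setT); rewrite ?inE //
    => y _; exact: fg.
- apply: ereal_sup_le => _ [h /= hf <-]; exists h => //= x.
  apply: (le_trans (hf x)); apply: (@funeneg_le _ _ setT); rewrite ?inE //
    => y _; exact: fg.
Qed.

Lemma integral_sandwich d (T : measurableType d) (R : realType)
    (mu : {measure set T -> \bar R}) (w f : T -> R) (a b : R) :
  mu.-integrable setT (EFin \o w) ->
  (forall t, a * w t <= f t <= b * w t) ->
  (a%:E * \int[mu]_t (w t)%:E <= \int[mu]_t (f t)%:E)%E /\
  (\int[mu]_t (f t)%:E <= b%:E * \int[mu]_t (w t)%:E)%E.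
Proof.
move=> iw fw; rewrite -!integralZl //.
by split; apply: le_integral_pointwise => t; rewrite -EFinM lee_fin; case/andP: (fw t).
Qed.

Lemma indic_itvE (R : realType) (a b t : R) :
  \1_(`[a, b]%classic) t = (if (a <= t) && (t <= b) then 1 else 0 : R).
Proof.
rewrite indicE set_itvE; case: ifPn => h; first by rewrite mem_set.
by rewrite memNset //=; apply/negP.
Qed.

Lemma integralZ_indic_itv (R : realType) (c a b : R) : 0 <= c -> a <= b ->
  (\int[@lebesgue_measure R]_t (c * \1_(`[a, b]%classic) t)%:E = (c * (b - a))%:E)%E.
Proof.
move=> c0 ab; under eq_integral do rewrite EFinM.
rewrite ge0_integralZl_EFin //; last first.
  by apply/measurable_EFinP; exact: measurable_indic.
rewrite integral_indic //= setIT lebesgue_measure_itv /= lte_fin.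
case: ltP => [_|ba]; first by rewrite -EFinD -EFinM.
by rewrite (@le_anti _ _ a b) ?ab // subrr mulr0 mule0.
Qed.

Section tent.
Context {R : realType}.
Implicit Types x r t : R.

Definition tent x r t : R := Num.max 0 (r - `|t - x|).

Lemma tent_ge0 x r t : 0 <= tent x r t.
Proof. by rewrite le_max lexx. Qed.

Lemma tent_neq0 x r t : tent x r t != 0 -> `|t - x| < r.
Proof. by apply: contraNT; rewrite /tent -leNgt -subr_le0 => /max_l ->. Qed.

Lemma continuous_tent x r : continuous (tent x r).
Proof.
move=> t; apply: (@continuous_max R R (cst 0) (fun t => r - `|t - x|)).
  exact: cst_continuous.
apply: continuousB; first exact: cst_continuous.
apply: (@continuous_comp _ _ _ (fun t => t - x) Num.norm); last exact: norm_continuous.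
by apply: continuousB; [exact: cvg_id | exact: cst_continuous].
Qed.

Lemma tent_compact_support x r : has_compact_support (tent x r).
Proof.
apply: (subclosed_compact _ (@segment_compact R (x - r) (x + r))).
  exact: closed_closure.
rewrite [X in _ `<=` X](closure_id _).1; last exact: itv_closed.
apply: closureS => t /tent_neq0 /ltW; rewrite ler_norml /= in_itv /=.
by case/andP => ? ?; apply/andP; split; lra.
Qed.

Lemma tent_le_indic x r t : 0 < r -> tent x r t <= r * \1_(`[x - r, x + r]%classic) t.
Proof.
move=> r0; rewrite indic_itvE.
have [->|/tent_neq0] := eqVneq (tent x r t) 0.
  by case: ifP => _; rewrite ?mulr1 ?mulr0 // ltW.
rewrite ltr_norml => /andP[? ?]; rewrite ifT; last by apply/andP; split; lra.
by rewrite mulr1 ge_max ltW //= gerBl.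
Qed.

Lemma indic_le_tent x r t : 0 < r ->
  r / 2 * \1_(`[x - r / 2, x + r / 2]%classic) t <= tent x r t.
Proof.
move=> r0; rewrite indic_itvE; case: ifP => [/andP[? ?]|_]; last by rewrite mulr0 tent_ge0.
have : `|t - x| <= r / 2 by rewrite ler_norml; apply/andP; split; lra.
by rewrite mulr1 le_max => ?; apply/orP; right; lra.
Qed.

Lemma integral_tent_bounds x r : 0 < r ->
  ((r ^+ 2 / 2)%:E <= \int[@lebesgue_measure R]_t (tent x r t)%:E <= (2 * r ^+ 2)%:E)%E.
Proof.
move=> r0; apply/andP; split.
- have -> : r ^+ 2 / 2 = r / 2 * ((x + r / 2) - (x - r / 2)) by field.
  rewrite -integralZ_indic_itv; [|lra|lra].
  by apply: le_integral_pointwise => t; rewrite lee_fin indic_le_tent.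
- have -> : 2 * r ^+ 2 = r * ((x + r) - (x - r)) by ring.
  rewrite -integralZ_indic_itv; [|lra|lra].
  by apply: le_integral_pointwise => t; rewrite lee_fin tent_le_indic.
Qed.

Lemma integrable_tent x r : 0 < r ->
  (@lebesgue_measure R).-integrable setT (fun t => (tent x r t)%:E).
Proof.
move=> r0; apply/integrableP; split.
  by apply/measurable_EFinP; apply: continuous_measurable_fun; exact: continuous_tent.
under eq_integral do rewrite gee0_abs ?lee_fin ?tent_ge0 //.
case/andP: (integral_tent_bounds x r r0) => _ /le_lt_trans; apply; exact: ltry.
Qed.

Lemma integral_tent_mul_bounds (G : R -> R) x r eta : 0 < r ->
  (forall t, `|t - x| < r -> `|G t - G x| <= eta) ->
  let I := (\int[@lebesgue_measure R]_t (tent x r t)%:E)%E in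
  ((G x - eta)%:E * I <= \int[@lebesgue_measure R]_t (tent x r t * G t)%:E)%E /\
  (\int[@lebesgue_measure R]_t (tent x r t * G t)%:E <= (G x + eta)%:E * I)%E.
Proof.
move=> r0 G_near; apply: integral_sandwich; first exact: integrable_tent.
move=> t; have [->|/tent_neq0 /G_near] := eqVneq (tent x r t) 0.
  by rewrite !mulr0 mul0r lexx.
rewrite ler_norml => /andP[? ?]; rewrite ![_ * tent x r t]mulrC.
by apply/andP; split; apply: ler_wpM2l; rewrite ?tent_ge0 //; lra.
Qed.

End tent.

Section band.
Context {R : realType} (k : nat).
Hypothesis k_gt0 : (0 < k)%N.

Lemma band_pairE (t y : R) : band k (t, y) = \1_(`[t - k%:R^-1, t + k%:R^-1]%classic) y.
Proof.
rewrite /band !indic_itvE /=; congr (if _ then _ else _).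
by apply/andP/andP => -[? ?]; split; lra.
Qed.

Lemma band_ge0 (z : R * R) : 0 <= band k z.
Proof. by rewrite /band indic_itvE; case: ifP. Qed.

Lemma measurable_band : measurable_fun setT (band k : R * R -> R).
Proof.
apply: measurableT_comp; first exact: measurable_indic.
by apply: measurable_funB; [exact: measurable_fst | exact: measurable_snd].
Qed.

Lemma measurable_mul_band (psi : R -> R) : measurable_fun setT psi ->
  measurable_fun setT (fun z : R * R => psi z.1 * band k z).
Proof.
move=> mpsi; apply: measurable_funM; last exact: measurable_band.
exact: measurableT_comp.
Qed.

Lemma integral_band (psi : R -> R) : measurable_fun setT psi -> (forall t, 0 <= psi t) ->
  (\int[(@lebesgue_measure R) \x (@lebesgue_measure R)]_z (psi z.1 * band k z)%:E =
   \int[@lebesgue_measure R]_t (psi t)%:E * (2 / k%:R)%:E)%E.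
Proof.
move=> mpsi psi0; have k_inv_gt0 : 0 < k%:R^-1 :> R by rewrite invr_gt0 ltr0n.
rewrite fubini_tonelli1; last 2 first.
- by apply/measurable_EFinP; exact: measurable_mul_band.
- by move=> z; rewrite lee_fin mulr_ge0 ?band_ge0.
rewrite /fubini_F /= -ge0_integralZr //; last 2 first.
- exact/measurable_EFinP.
- by move=> t _; rewrite lee_fin.
apply: eq_integral => t _; under eq_integral do rewrite band_pairE.
rewrite integralZ_indic_itv //; last lra.
by rewrite -EFinM; congr (_ * _)%:E; lra.
Qed.

Lemma integrable_band (psi : R -> R) : (forall t, 0 <= psi t) ->
  (@lebesgue_measure R).-integrable setT (fun t => (psi t)%:E) ->
  ((@lebesgue_measure R) \x (@lebesgue_measure R))%E.-integrable setT
    (fun z => (psi z.1 * band k z)%:E).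
Proof.
move=> psi0 ipsi.
have mpsi : measurable_fun setT psi by apply/measurable_EFinP; case/integrableP: ipsi.
apply/integrableP; split; first by apply/measurable_EFinP; exact: measurable_mul_band.
under eq_integral do rewrite gee0_abs ?lee_fin ?mulr_ge0 ?band_ge0 //.
by rewrite integral_band // -(fineK (integrable_fin_num _ ipsi)) // -EFinM ltry.
Qed.

End band.

Section localization.
Context {R : realType} {k : nat} {Phi : R * R -> R} {x M eps d : R}.
Hypothesis k_gt0 : (0 < k)%N.
Hypothesis Phi_near :
  forall t y, `|t - x| < d -> `|y - x| < d -> `|Phi (t, y) - M| <= eps.

Lemma int_Pi_tent_bounds r : 0 < r -> r + k%:R^-1 <= d ->
  let I := (\int[@lebesgue_measure R]_t (tent x r t)%:E)%E in
  ((M - eps)%:E * (I * (2 / k%:R)%:E) <= int_Pi k (fun z => tent x r z.1 * Phi z)%R)%E /\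
  (int_Pi k (fun z => tent x r z.1 * Phi z)%R <= (M + eps)%:E * (I * (2 / k%:R)%:E))%E.
Proof.
move=> r0 rkd I; have k_inv_gt0 : 0 < k%:R^-1 :> R by rewrite invr_gt0 ltr0n.
rewrite /I -integral_band //; last 2 first.
- by apply: continuous_measurable_fun; exact: continuous_tent.
- exact: tent_ge0.
apply: integral_sandwich.
  by apply: integrable_band => //; [exact: tent_ge0 | exact: integrable_tent].
case=> t y /=; rewrite band_pairE indic_itvE.
case: ifP => [/andP[? ?]|_]; last by rewrite !mulr0 lexx.
have [->|/tent_neq0 xt] := eqVneq (tent x r t) 0; first by rewrite !(mulr0, mul0r) lexx.
have : `|Phi (t, y) - M| <= eps.
  by apply: Phi_near; rewrite ltr_norml; move: xt; rewrite ltr_norml => /andP[? ?];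
    apply/andP; split; lra.
rewrite ler_norml => /andP[? ?]; rewrite !mulr1 ![_ * tent x r t]mulrC.
by apply/andP; split; apply: ler_wpM2l; rewrite ?tent_ge0 //; lra.
Qed.

Context {G : R -> R}.
Hypothesis G_weak : forall phi : R -> R, continuous phi -> has_compact_support phi ->
  (\int[@lebesgue_measure R]_t (phi t * G t)%:E)%E = int_Pi k (fun z => phi z.1 * Phi z).

Lemma weak_density_tent_bounds r eta : 0 < r -> r + k%:R^-1 <= d ->
  (forall t, `|t - x| < r -> `|G t - G x| <= eta) ->
  G x - eta <= (M + eps) * (2 / k%:R) /\ (M - eps) * (2 / k%:R) <= G x + eta.
Proof.
move=> r0 rkd G_near.
have [G_lb G_ub] := integral_tent_mul_bounds _ _ _ _ r0 G_near.
have [Pi_lb Pi_ub] := int_Pi_tent_bounds _ r0 rkd.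
rewrite -G_weak in Pi_lb Pi_ub; [|exact: continuous_tent|exact: tent_compact_support].
set I := (\int[@lebesgue_measure R]_t (tent x r t)%:E)%E in G_lb G_ub Pi_lb Pi_ub.
have I_fin : I \is a fin_num by exact: integrable_fin_num _ (integrable_tent x r r0).
have I_gt0 : 0 < fine I.
  rewrite -lte_fin fineK //; apply: lt_le_trans (andP (integral_tent_bounds x r r0)).1.
  by rewrite lte_fin divr_gt0 // exprn_gt0.
have := le_trans G_lb Pi_ub; have := le_trans Pi_lb G_ub.
rewrite -(fineK I_fin) -!EFinM !lee_fin => lo up.
by split; nra.
Qed.

Lemma weak_density_bounds : {for x, continuous G} -> k%:R^-1 < d ->
  `|k%:R * G x - 2 * M| <= 2 * eps.
Proof.
move=> cG kd.
have near_bounds eta : 0 < eta ->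
    G x - eta <= (M + eps) * (2 / k%:R) /\ (M - eps) * (2 / k%:R) <= G x + eta.
  move=> eta0; move/cvgrPdist_le: cG => /(_ eta eta0) /nbhs_ballP[r r0 G_near].
  have r'_le : Num.min r (d - k%:R^-1) <= r /\ Num.min r (d - k%:R^-1) <= d - k%:R^-1.
    by rewrite !ge_min !lexx orbT.
  apply: (@weak_density_tent_bounds (Num.min r (d - k%:R^-1))).
  - by rewrite lt_min r0 subr_gt0.
  - lra.
  - move=> t xt; rewrite distrC; apply: G_near; rewrite -ball_normE /ball_ /= distrC.
    by apply: lt_le_trans xt _; case: r'_le.
have ub : G x <= (M + eps) * (2 / k%:R).
  by apply/ler_addgt0Pr => e /near_bounds[le _]; lra.
have lb : (M - eps) * (2 / k%:R) <= G x.
  by apply/ler_addgt0Pr => e /near_bounds[_ le]; lra.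
have kc : k%:R * (2 / k%:R) = 2 :> R by rewrite mulrCA mulfV ?mulr1 // pnatr_eq0 -lt0n.
have -> : 2 * eps = k%:R * (eps * (2 / k%:R)) by rewrite mulrCA kc mulrC.
have -> : k%:R * G x - 2 * M = k%:R * (G x - M * (2 / k%:R)).
  by rewrite mulrBr [k%:R * (M * _)]mulrCA kc [M * 2]mulrC.
rewrite normrM ger0_norm ?ler0n // ler_wpM2l ?ler0n // ler_norml.
by apply/andP; split; lra.
Qed.

End localization.

Lemma cvg_weak_density {R : realType} (Phi : R * R -> R) (G : nat -> R -> R) (x : R) :
  {for (x, x), continuous Phi} ->
  (forall k, (0 < k)%N -> {for x, continuous (G k)}) ->
  (forall k, (0 < k)%N -> forall phi : R -> R,
     continuous phi -> has_compact_support phi ->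
     (\int[@lebesgue_measure R]_t (phi t * G k t)%:E)%E =
     int_Pi k (fun z => phi z.1 * Phi z)) ->
  (fun k => k%:R * G k x) @ \oo --> 2 * Phi (x, x).
Proof.
move=> cPhi cG G_weak; apply/cvgrPdist_le => e e0.
have e2_gt0 : 0 < e / 2 by rewrite divr_gt0.
move/cvgrPdist_lt: cPhi => /(_ _ e2_gt0) /nbhs_ballP[d d0 Phi_near].
near=> k.
have k_gt0 : (0 < k)%N by near: k; exact: nbhs_infty_gt.
have kd : k%:R^-1 < d.
  have : d^-1 < k%:R by near: k; exact: nbhs_infty_gtr.
  by rewrite invf_plt // posrE ltr0n.
rewrite distrC (_ : e = 2 * (e / 2)); last by field.
apply: (weak_density_bounds k_gt0 _ (G_weak k k_gt0) (cG k k_gt0) kd).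
move=> t y xt xy; apply/ltW; rewrite distrC; apply: Phi_near.
by split; rewrite -ball_normE /ball_ /= distrC.
Unshelve. all: by end_near.
Qed.

Lemma continuous_Pker {R : realType} : continuous (@Pker R).
Proof.
move=> t; apply: (continuousM (s := fun _ : R => pi^-1) (t := fun t => (1 + t ^+ 2)^-1)).
  exact: cst_continuous.
apply: continuousV; first by rewrite gt_eqF // ltr_pwDl // sqr_ge0.
apply: continuousD; first exact: cst_continuous.
exact: exprn_continuous.
Qed.

Lemma continuous_Pk {R : realType} (k : nat) : continuous (@Pk R k).
Proof.
move=> t; apply: (continuousM (s := fun _ : R => k%:R) (t := fun t => Pker (k%:R * t))).
  exact: cst_continuous.
by apply: continuous_comp; [exact: mulrl_continuous | exact: continuous_Pker].
Qed.

Lemma scaled_Pk_factorE {R : realType} (k : nat) (x : R) : (0 < k)%N ->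
  pi * (k%:R^-1 ^+ 2 + x ^+ 2) * (k%:R * Pk k x) = 1.
Proof.
move=> k_gt0; have k_neq0 : k%:R != 0 :> R by rewrite pnatr_eq0 -lt0n.
have Pker_neq0 : 1 + (k%:R * x) ^+ 2 != 0 :> R by rewrite gt_eqF // ltr_pwDl // sqr_ge0.
rewrite /Pk /Pker; move: (@pi R) (pi_gt0 R) => p /lt0r_neq0 p_neq0.
by field; rewrite k_neq0 Pker_neq0 p_neq0.
Qed.

Lemma cvg_invn {R : realType} : (n%:R^-1 : R) @[n --> \oo] --> 0.
Proof.
apply/gtr0_cvgV0; last exact: cvgr_idn.
by near=> n; rewrite ltr0n; near: n; exact: nbhs_infty_gt.
Unshelve. all: by end_near.
Qed.

Theorem proposition10p1 (R : realType) (Phi : R * R -> R)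
  (Kir : nat -> R -> R) :
  continuous Phi -> has_compact_support Phi ->
  (forall k, (0 < k)%N -> continuous (Kir k)) ->
  (forall k, (0 < k)%N -> forall phi : R -> R,
     continuous phi -> has_compact_support phi ->
     (\int[@lebesgue_measure R]_x (phi x * Kir k x * Pk k x)%:E)%E =
     int_Pi k (fun z => phi z.1 * Phi z)) ->
  forall x : R, (fun k => Kir k x) @ \oo --> 2 * pi * x ^+ 2 * Phi (x, x).
Proof.
(* Only the continuity of Phi at (x, x) is used, not its compact support. *)
move=> cPhi _ cKir Kir_weak x.
have scaled : (fun k => k%:R * (Kir k x * Pk k x)) @ \oo --> 2 * Phi (x, x).
  apply: (@cvg_weak_density _ _ (fun k t => Kir k t * Pk k t) _ (cPhi (x, x)))
    => [k k_gt0 | k k_gt0 phi cphi sphi].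
    exact: continuousM (cKir k k_gt0 x) (continuous_Pk k x).
  by rewrite -Kir_weak //; apply: eq_integral => t _; rewrite mulrA.
have factor : (fun k => pi * (k%:R^-1 ^+ 2 + x ^+ 2)) @ \oo --> pi * x ^+ 2.
  have -> : pi * x ^+ 2 = pi * (0 * 0 + x ^+ 2) by rewrite mul0r add0r.
  apply: cvgM; first exact: cvg_cst.
  by apply: cvgD; [apply: cvgM; exact: cvg_invn | exact: cvg_cst].
have -> : 2 * pi * x ^+ 2 * Phi (x, x) = pi * x ^+ 2 * (2 * Phi (x, x)) by ring.
apply: cvg_trans (cvgM factor scaled); apply: near_eq_cvg; near=> k.
have k_gt0 : (0 < k)%N by near: k; exact: nbhs_infty_gt.
change (pi * (k%:R^-1 ^+ 2 + x ^+ 2) * (k%:R * (Kir k x * Pk k x)) = Kir k x).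
by rewrite [Kir k x * _]mulrC (mulrA k%:R) mulrA scaled_Pk_factorE // mul1r.
Unshelve. all: by end_near.
Qed.
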